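(* If the open extension of $\equiv_{\mathcal{V}}$ is compatible, then the logics $\mathcal{V}$ and $\mathcal{V}^-$ are equi-expressive. Similarly, if the open extension of $\sqsubseteq_{\mathcal{V}^+}$ is compatible, then the logics $\mathcal{V}^+$ and $\mathcal{V}^{-+}$ are equi-expressive. (Equi-expressive: every value/computation formula of either logic is satisfied by exactly the same closed terms as some formula of the same type and aspect of the other.)
   Context: Language: types $\tau ::= \mathbf{1}\mid\mathbf{N}\mid\tau\to\tau'$; values $*, Z, S(V), \lambda x{:}\tau.M, x$; computations $VW$, $\mathbf{return}\,V$, $\mathbf{let}\,M\Rightarrow x\,\mathbf{in}\,N$, $\mathbf{fix}(V)$, $\mathbf{case}\,V\,\mathbf{of}\,\{Z\Rightarrow M;S(x)\Rightarrow N\}$, and effect operations from a signature $\Sigma$ (arities $\alpha^n\to\alpha$, $\mathbf{N}\times\alpha^n\to\alpha$, $\alpha^{\mathbf{N}}\to\alpha$, $\mathbf{N}\times\alpha^{\mathbf{N}}\to\alpha$), simply typed call-by-value. $\mathit{Val}(\tau)$, $\mathit{Com}(\tau)$: closed values/computations; $\overline{n}=S^n(Z)$. Each $M\in\mathit{Com}(\tau)$ has an operational effect tree $|M|\in T(\mathit{Val}(\tau))$, $TX$ being possibly infinite trees with leaves $\bot$ or in $X$ and nodes labelled by effect operations. A set $\mathcal{O}$ of modalities with $[\![o]\!]\subseteq T\mathbf{1}$ is given; $t[\in P]$ replaces leaves in $P$ by $*$ and other value leaves by $\bot$. Logic $\mathcal{V}$: value formulas $VF(\tau)$, computation formulas $CF(\tau)$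 generated by $\{n\}\in VF(\mathbf{N})$; $(V\mapsto\Phi)\in VF(\tau\to\tau')$ for $V\in\mathit{Val}(\tau)$, $\Phi\in CF(\tau')$; $o\phi\in CF(\tau)$ for $o\in\mathcal{O}$, $\phi\in VF(\tau)$; closure of both under arbitrary $\bigwedge,\bigvee,\neg$. Semantics: $W\models\{n\}$ iff $W=\overline{n}$; $W\models(V\mapsto\Phi)$ iff $WV\models\Phi$; $M\models o\phi$ iff $|M|[\in\{V\mid V\models\phi\}]\in[\![o]\!]$; connectives classical. $\mathcal{V}^+$: the negation-free fragment. Pure logic $\mathcal{V}^-$: as $\mathcal{V}$ but with the rule for $(V\mapsto\Phi)$ replaced by $(\phi\mapsto\Psi)\in VF(\tau\to\tau')$ for $\phi\in VF(\tau)$, $\Psi\in CF(\tau')$, with $W\models(\phi\mapsto\Psi)$ iff for all $V\in\mathit{Val}(\tau)$, $V\models\phi$ implies $WV\models\Psi$; $\mathcal{V}^{-+}$ is its negation-free fragment. For a logic $\mathcal{L}$, $A\sqsubseteq_{\mathcal{L}}B$ iff every formula of $\mathcal{L}$ satisfied by $A$ is satisfied by $B$; $\equiv_{\mathcal{L}}$ is the induced equivalence. Open extension: $\Gamma\vdash M\,R^\circ\,N$ iff $M[\vec V/\vec x]\,R\,N[\vec V/\vec x]$ for all closed value instantiations; compatible: relates each variable to itself and is closed under all term constructors. *)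

From Stdlib Require Import ClassicalEpsilon.
From mathcomp Require Import all_boot.
Set Implicit Arguments. Unset Strict Implicit. Unset Printing Implicit Defensive.

(* Arities of effect operations:
   AFin n  : alpha^n -> alpha         APFin n : N x alpha^n -> alpha
   AInf    : alpha^N -> alpha         APInf   : N x alpha^N -> alpha *)
Inductive arity := AFin of nat | APFin of nat | AInf | APInf.

Inductive ty := T1 | TN | TArr of ty & ty.

Section Language.
Variable Sig : Type.
Variable ar : Sig -> arity.

(* Raw syntax with de Bruijn indices (variable 0 = innermost binder).
   VLam t m          = lambda x:t. m              (x bound in m)
   CLet m n          = let m => x in n            (x bound in n)
   CFix t v          = fix(v), t = argument type of the resulting function
   CCase v m n       = case v of {Z => m; S(x) => n}   (x bound in n)
   COp s None ms     = s(M_0,...,M_{n-1})         (arity alpha^n)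
   COp s (Some v) ms = s(V; M_0,...,M_{n-1})      (arity N x alpha^n)
   COpN s None f     = s(f),   f : N -> tau       (arity alpha^N)
   COpN s (Some v) f = s(V; f), f : N -> tau      (arity N x alpha^N) *)
Inductive val :=
  | VUnit | VZ | VS (v : val) | VLam (t : ty) (m : comp) | VVar (i : nat)
with comp :=
  | CApp (v w : val) | CRet (v : val) | CLet (m n : comp) | CFix (t : ty) (v : val)
  | CCase (v : val) (m n : comp)
  | COp (s : Sig) (p : option val) (ms : seq comp)
  | COpN (s : Sig) (p : option val) (f : val).

Definition dcomp : comp := CRet VUnit.

(* Simultaneous substitution of (closed) values s_0,...,s_{k-1} for the
   free variables k, k+1, ... (under k binders). Only used with closed values. *)
Fixpoint csv (s : seq val) (k : nat) (v : val) {struct v} : val :=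
  match v with
  | VUnit => VUnit
  | VZ => VZ
  | VS w => VS (csv s k w)
  | VLam t m => VLam t (csc s k.+1 m)
  | VVar i => if i < k then VVar i
              else if i - k < size s then nth VUnit s (i - k)
              else VVar (i - size s)
  end
with csc (s : seq val) (k : nat) (m : comp) {struct m} : comp :=
  match m with
  | CApp v w => CApp (csv s k v) (csv s k w)
  | CRet v => CRet (csv s k v)
  | CLet m n => CLet (csc s k m) (csc s k.+1 n)
  | CFix t v => CFix t (csv s k v)
  | CCase v m n => CCase (csv s k v) (csc s k m) (csc s k.+1 n)
  | COp o p ms => COp o (omap (csv s k) p) (map (csc s k) ms)
  | COpN o p f => COpN o (omap (csv s k) p) (csv s k f)
  end.

(* Simple typing (contexts: head = variable 0). *)
Inductive tyv : seq ty -> val -> ty -> Prop :=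
  | tyUnit G : tyv G VUnit T1
  | tyZ G : tyv G VZ TN
  | tySu G v : tyv G v TN -> tyv G (VS v) TN
  | tyLam G t t' m : tyc (t :: G) m t' -> tyv G (VLam t m) (TArr t t')
  | tyVar G i : i < size G -> tyv G (VVar i) (nth T1 G i)
with tyc : seq ty -> comp -> ty -> Prop :=
  | tyApp G t t' v w : tyv G v (TArr t t') -> tyv G w t -> tyc G (CApp v w) t'
  | tyRet G t v : tyv G v t -> tyc G (CRet v) t
  | tyLet G t t' m n : tyc G m t -> tyc (t :: G) n t' -> tyc G (CLet m n) t'
  | tyFix G t t' v : tyv G v (TArr (TArr t t') (TArr t t')) -> tyc G (CFix t v) (TArr t t')
  | tyCase G t v m n : tyv G v TN -> tyc G m t -> tyc (TN :: G) n t -> tyc G (CCase v m n) t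
  | tyOpFin G t o ms : ar o = AFin (size ms) ->
      (forall i, i < size ms -> tyc G (nth dcomp ms i) t) -> tyc G (COp o None ms) t
  | tyOpPFin G t o v ms : ar o = APFin (size ms) -> tyv G v TN ->
      (forall i, i < size ms -> tyc G (nth dcomp ms i) t) -> tyc G (COp o (Some v) ms) t
  | tyOpInf G t o f : ar o = AInf -> tyv G f (TArr TN t) -> tyc G (COpN o None f) t
  | tyOpPInf G t o v f : ar o = APInf -> tyv G v TN -> tyv G f (TArr TN t) ->
      tyc G (COpN o (Some v) f) t.

Definition numeral (n : nat) : val := iter n VS VZ.
Fixpoint val_nat (v : val) : option nat :=
  match v with VZ => Some 0 | VS w => omap S (val_nat w) | _ => None end.

(* configuration = (stack of continuations "x.N" (x = var 0), computation) *)
Definition config := (seq comp * comp)%type.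

Inductive result :=
  | RStep of config
  | RLeaf of val
  | RNode of Sig & option nat & (nat -> option config)
  | RStuck.

Definition step (c : config) : result :=
  let (S, m) := c in
  match m with
  | CRet v => if S is n :: S' then RStep (S', csc [:: v] 0 n) else RLeaf v
  | CLet m n => RStep (n :: S, m)
  | CApp (VLam _ b) w => RStep (S, csc [:: w] 0 b)
  | CApp _ _ => RStuck
  (* fix(V) --> V (lambda x. let fix(V) => y in y x) *)
  | CFix t v => RStep (S, CApp v (VLam t (CLet (CFix t v) (CApp (VVar 0) (VVar 1)))))
  | CCase v m n =>
      match v with VZ => RStep (S, m) | VS w => RStep (S, csc [:: w] 0 n) | _ => RStuck end
  | COp o p ms =>
      let kids := fun i => if i < size ms then Some (S, nth dcomp ms i) else None in
      match p with
      | None => RNode o None kids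
      | Some v => if val_nat v is Some k then RNode o (Some k) kids else RStuck
      end
  | COpN o p f =>
      let kids := fun i => Some (S, CApp f (numeral i)) in
      match p with
      | None => RNode o None kids
      | Some v => if val_nat v is Some k then RNode o (Some k) kids else RStuck
      end
  end.

(* A possibly infinite tree in T X is represented extensionally by the label it
   carries at each position (a path = list of child indices):
   LLeaf x (a leaf in X), LBot (a bottom leaf; positions below a bottom leaf
   are also LBot), LNode s k (a node labelled by operation s, with parameter
   k = Some n for operations with an N-parameter), LAbsent (position not in
   the tree). *)
Inductive label (X : Type) := LLeaf of X | LBot | LNode of Sig & option nat | LAbsent.
Arguments LBot {X}. Arguments LAbsent {X}.

Definition tree (X : Type) := seq nat -> label X.

Fixpoint run (fuel : nat) (c : config) (p : seq nat) : label val :=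
  match fuel with
  | 0 => LBot
  | f.+1 =>
    match step c with
    | RStep c' => run f c' p
    | RLeaf v => if p is [::] then LLeaf v else LAbsent
    | RNode s k kids =>
        match p with
        | [::] => LNode _ s k
        | i :: p' => if kids i is Some c' then run f c' p' else LAbsent
        end
    | RStuck => LBot
    end
  end.

(* the limit of the approximations (labels stabilise once not LBot) *)
Definition tree_of (c : config) : tree val :=
  fun p => run (epsilon (inhabits 0) (fun n => run n c p <> LBot)) c p.

Definition opsem (M : comp) : tree val := tree_of ([::], M).

(* t[in P] : leaves in P become *, other value leaves become bottom *)
Definition restrict (P : val -> Prop) (t : tree val) : tree unit :=
  fun p =>
    if excluded_middle_informative
         (exists k V, k <= size p /\ t (take k p) = LLeaf V /\ ~ P V)
    then LBot
    else match t p with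
         | LLeaf _ => LLeaf tt
         | LBot => LBot
         | LNode s k => LNode _ s k
         | LAbsent => LAbsent
         end.

Variable O : Type.
Variable osem : O -> tree unit -> Prop.

Unset Implicit Arguments.
(* Logic V; the boolean index says whether negation may occur
   (vform true = V, vform false = negation-free fragment V^+). *)
Inductive vform : bool -> ty -> Type :=
  | FNum b (n : nat) : vform b TN
  | FPt b t t' (V : val) : tyv [::] V t -> cform b t' -> vform b (TArr t t')
  | FVAnd b t (I : Type) : (I -> vform b t) -> vform b t
  | FVOr b t (I : Type) : (I -> vform b t) -> vform b t
  | FVNeg t : vform true t -> vform true t
with cform : bool -> ty -> Type :=
  | FMod b t (o : O) : vform b t -> cform b t
  | FCAnd b t (I : Type) : (I -> cform b t) -> cform b t
  | FCOr b t (I : Type) : (I -> cform b t) -> cform b t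
  | FCNeg t : cform true t -> cform true t.

Fixpoint satv b t (phi : vform b t) (W : val) {struct phi} : Prop :=
  match phi with
  | FNum _ n => W = numeral n
  | FPt _ _ _ V _ Phi => satc _ _ Phi (CApp W V)
  | FVAnd _ _ J f => forall i, satv _ _ (f i) W
  | FVOr _ _ J f => exists i, satv _ _ (f i) W
  | FVNeg _ psi => ~ satv _ _ psi W
  end
with satc b t (Phi : cform b t) (M : comp) {struct Phi} : Prop :=
  match Phi with
  | FMod _ _ o phi => osem o (restrict (fun V => satv _ _ phi V) (opsem M))
  | FCAnd _ _ J f => forall i, satc _ _ (f i) M
  | FCOr _ _ J f => exists i, satc _ _ (f i) M
  | FCNeg _ Psi => ~ satc _ _ Psi M
  end.

(* Pure logic V^- (pvform true) and its negation-free fragment V^{-+} (pvform false). *)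
Inductive pvform : bool -> ty -> Type :=
  | PNum b (n : nat) : pvform b TN
  | PArr b t t' : pvform b t -> pcform b t' -> pvform b (TArr t t')
  | PVAnd b t (I : Type) : (I -> pvform b t) -> pvform b t
  | PVOr b t (I : Type) : (I -> pvform b t) -> pvform b t
  | PVNeg t : pvform true t -> pvform true t
with pcform : bool -> ty -> Type :=
  | PMod b t (o : O) : pvform b t -> pcform b t
  | PCAnd b t (I : Type) : (I -> pcform b t) -> pcform b t
  | PCOr b t (I : Type) : (I -> pcform b t) -> pcform b t
  | PCNeg t : pcform true t -> pcform true t.

Fixpoint psatv b t (phi : pvform b t) (W : val) {struct phi} : Prop :=
  match phi with
  | PNum _ n => W = numeral n
  | PArr _ t _ phi Psi => forall V, tyv [::] V t -> psatv _ _ phi V -> psatc _ _ Psi (CApp W V)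
  | PVAnd _ _ J f => forall i, psatv _ _ (f i) W
  | PVOr _ _ J f => exists i, psatv _ _ (f i) W
  | PVNeg _ psi => ~ psatv _ _ psi W
  end
with psatc b t (Phi : pcform b t) (M : comp) {struct Phi} : Prop :=
  match Phi with
  | PMod _ _ o phi => osem o (restrict (fun V => psatv _ _ phi V) (opsem M))
  | PCAnd _ _ J f => forall i, psatc _ _ (f i) M
  | PCOr _ _ J f => exists i, psatc _ _ (f i) M
  | PCNeg _ Psi => ~ psatc _ _ Psi M
  end.

Arguments satv {b t}. Arguments satc {b t}. Arguments psatv {b t}. Arguments psatc {b t}.
Set Implicit Arguments.
Definition vle (b : bool) (t : ty) (V W : val) : Prop :=
  tyv [::] V t /\ tyv [::] W t /\ forall phi : vform b t, satv phi V -> satv phi W.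
Definition cle (b : bool) (t : ty) (M N : comp) : Prop :=
  tyc [::] M t /\ tyc [::] N t /\ forall Phi : cform b t, satc Phi M -> satc Phi N.
Definition veq b t V W := vle b t V W /\ vle b t W V.
Definition ceq b t M N := cle b t M N /\ cle b t N M.

Definition closed_inst (G : seq ty) (s : seq val) : Prop :=
  size s = size G /\ forall i, i < size G -> tyv [::] (nth VUnit s i) (nth T1 G i).

Definition openv (R : ty -> val -> val -> Prop) (G : seq ty) (t : ty) (V W : val) : Prop :=
  tyv G V t /\ tyv G W t /\ forall s, closed_inst G s -> R t (csv s 0 V) (csv s 0 W).
Definition openc (R : ty -> comp -> comp -> Prop) (G : seq ty) (t : ty) (M N : comp) : Prop :=
  tyc G M t /\ tyc G N t /\ forall s, closed_inst G s -> R t (csc s 0 M) (csc s 0 N).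

Definition compatible (Rv : seq ty -> ty -> val -> val -> Prop)
                      (Rc : seq ty -> ty -> comp -> comp -> Prop) : Prop :=
     (forall G i, i < size G -> Rv G (nth T1 G i) (VVar i) (VVar i)) /\
      (forall G, Rv G T1 VUnit VUnit) /\
      (forall G, Rv G TN VZ VZ) /\
      (forall G v w, Rv G TN v w -> Rv G TN (VS v) (VS w)) /\
      (forall G t t' m n, Rc (t :: G) t' m n -> Rv G (TArr t t') (VLam t m) (VLam t n)) /\
      (forall G t t' v v' w w', Rv G (TArr t t') v v' -> Rv G t w w' ->
          Rc G t' (CApp v w) (CApp v' w')) /\
      (forall G t v w, Rv G t v w -> Rc G t (CRet v) (CRet w)) /\
      (forall G t t' m m' n n', Rc G t m m' -> Rc (t :: G) t' n n' ->
          Rc G t' (CLet m n) (CLet m' n')) /\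
      (forall G t t' v w, Rv G (TArr (TArr t t') (TArr t t')) v w ->
          Rc G (TArr t t') (CFix t v) (CFix t w)) /\
      (forall G t v v' m m' n n', Rv G TN v v' -> Rc G t m m' -> Rc (TN :: G) t n n' ->
          Rc G t (CCase v m n) (CCase v' m' n')) /\
      (forall G t o ms ms', ar o = AFin (size ms) -> size ms' = size ms ->
          (forall i, i < size ms -> Rc G t (nth dcomp ms i) (nth dcomp ms' i)) ->
          Rc G t (COp o None ms) (COp o None ms')) /\
      (forall G t o v v' ms ms', ar o = APFin (size ms) -> size ms' = size ms ->
          Rv G TN v v' ->
          (forall i, i < size ms -> Rc G t (nth dcomp ms i) (nth dcomp ms' i)) ->
          Rc G t (COp o (Some v) ms) (COp o (Some v') ms')) /\
      (forall G t o f f', ar o = AInf -> Rv G (TArr TN t) f f' ->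
          Rc G t (COpN o None f) (COpN o None f')) /\
      (forall G t o v v' f f', ar o = APInf -> Rv G TN v v' -> Rv G (TArr TN t) f f' ->
          Rc G t (COpN o (Some v) f) (COpN o (Some v') f')).

Definition equi_expressive (b b' : bool) : Prop :=
  [/\ (forall t (phi : vform b t), exists psi : pvform b' t,
          forall V, tyv [::] V t -> (satv phi V <-> psatv psi V)),
      (forall t (Phi : cform b t), exists Psi : pcform b' t,
          forall M, tyc [::] M t -> (satc Phi M <-> psatc Psi M)),
      (forall t (psi : pvform b' t), exists phi : vform b t,
          forall V, tyv [::] V t -> (satv phi V <-> psatv psi V)) &
      (forall t (Psi : pcform b' t), exists Phi : cform b t,
          forall M, tyc [::] M t -> (satc Phi M <-> psatc Psi M))].

End Language.

From Pilot Require Import Defs.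
From mathcomp Require Import all_boot.
From Stdlib Require Import ClassicalEpsilon FunctionalExtensionality Classical.

(* A pure formula [phi |-> Psi] is the conjunction of the formulas [V |-> Psi] over the
   closed values [V] satisfying [phi]. Conversely, by induction on types, [V |-> Phi] is
   expressed by [chi_V |-> Psi], where [chi_V] is the conjunction of pure formulas separating
   [V] from each closed value [U] not above it in the logical preorder. This is sound once
   [W U] is monotone in [U] for that preorder, which is what compatibility of the open
   extension gives at application (for the full logic the preorder is symmetric, by negation,
   so it coincides with the equivalence). Modalities translate because the leaves of [|M|]
   are well typed, by subject reduction for the abstract machine. *)

Scheme tyv_mut_ind := Induction for tyv Sort Prop
with tyc_mut_ind := Induction for tyc Sort Prop.

Combined Scheme typing_mut_ind from tyv_mut_ind, tyc_mut_ind.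

Section Typing.
Local Set Implicit Arguments.
Local Unset Strict Implicit.
Variables (Sig : Type) (ar : Sig -> arity).
Local Notation value := (Defs.val Sig).
Local Notation term := (Defs.comp Sig).

Fixpoint csv_nil k (v : value) {struct v} : csv [::] k v = v
with csc_nil k (m : term) {struct m} : csc [::] k m = m.
Proof.
- case: v => [||w|t m|i] /=; rewrite ?csv_nil ?csc_nil //.
  by case: ifP => // _; rewrite subn0.
- case: m => [v w|v|m n|t v|v m n|o p ms|o p f] /=; rewrite ?csv_nil ?csc_nil //.
  + congr COp; first by case: p => //= v; rewrite csv_nil.
    by elim: ms => //= m ms ->; rewrite csc_nil.
  + by case: p => //= v; rewrite csv_nil.
Qed.

Lemma typing_weaken :
  (forall G v t, tyv ar G v t -> forall G', tyv ar (G ++ G') v t) /\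
  (forall G m t, tyc ar G m t -> forall G', tyc ar (G ++ G') m t).
Proof.
apply: typing_mut_ind; try by intros; econstructor; eauto.
move=> G i Hi G'; have -> : nth T1 G i = nth T1 (G ++ G') i by rewrite nth_cat Hi.
by apply: tyVar; rewrite size_cat ltn_addr.
Qed.

Lemma tyv_weaken_nil G v t : tyv ar [::] v t -> tyv ar G v t.
Proof. by move/(proj1 typing_weaken)/(_ G). Qed.

Lemma tyv_subst_var G' G s i : i < size (G' ++ G) -> closed_inst ar G s ->
  tyv ar G' (csv s (size G') (VVar Sig i)) (nth T1 (G' ++ G) i).
Proof.
move=> Hi [size_s ty_s] /=; rewrite nth_cat; case: ifP => [|HG']; first exact: tyVar.
rewrite size_cat in Hi.
have Hk : i - size G' < size s by rewrite size_s ltn_subLR // leqNgt HG'.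
by rewrite Hk; apply: tyv_weaken_nil; rewrite -size_s in ty_s; exact: ty_s.
Qed.

Lemma typing_subst G s : closed_inst ar G s ->
  (forall G0 v t, tyv ar G0 v t -> forall G', G0 = G' ++ G -> tyv ar G' (csv s (size G') v) t) /\
  (forall G0 m t, tyc ar G0 m t -> forall G', G0 = G' ++ G -> tyc ar G' (csc s (size G') m) t).
Proof.
move=> Hs; apply: typing_mut_ind; intros; subst; first [exact: tyv_subst_var | simpl].
all: econstructor; rewrite ?size_map; eauto.
all: by move=> j Hj; rewrite (nth_map (dcomp Sig)) //; eauto.
Qed.
Lemma tyc_subst1 t0 t n v :
  tyc ar [:: t0] n t -> tyv ar [::] v t0 -> tyc ar [::] (csc [:: v] 0 n) t.
Proof.
move=> Hn Hv; have Hs : closed_inst ar [:: t0] [:: v] by split=> // -[].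
exact: (proj2 (typing_subst Hs) _ _ _ Hn [::]).
Qed.

Lemma numeral_ty i : tyv ar [::] (numeral Sig i) TN.
Proof. by elim: i => [|i IH]; constructor. Qed.

Fixpoint stack_ty (S : seq term) (t0 t : ty) : Prop :=
  if S is n :: S' then exists t1, tyc ar [:: t0] n t1 /\ stack_ty S' t1 t else t0 = t.

Definition config_ty (c : config Sig) (t : ty) : Prop :=
  exists t0, tyc ar [::] c.2 t0 /\ stack_ty c.1 t0 t.

Lemma step_preserves_ty c t : config_ty c t ->
  match step c with
  | RStep c' => config_ty c' t
  | RLeaf v => tyv ar [::] v t
  | RNode _ _ kids => forall i c', kids i = Some c' -> config_ty c' t
  | RStuck => True
  end.
Proof.
case: c => S m [t0 [/= Hm HS]].
case: m Hm => [[| | ? | ? b | ?] w | v | m n | t1 v | [| | w | ? ? | ?] m n | o p ms | o p f] Hm //=.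
all: inversion Hm; subst.
- match goal with Hb : tyv _ _ (VLam _ _) _ |- _ => inversion Hb; subst end.
  by exists t0; split => //; apply: tyc_subst1; eassumption.
- case: S HS => [|n S] /= HS; first by subst.
  by case: HS => t1 [Hn HS]; exists t1; split => //; apply: tyc_subst1; eassumption.
- by exists t1; split => //; exists t0.
- eexists; split; last eassumption.
  econstructor; first eassumption.
  apply: tyLam; apply: (tyLet (t := TArr t1 t')); first by apply/tyFix/tyv_weaken_nil.
  by apply: tyApp; apply: (@tyVar _ ar [:: _; t1]).
- by exists t0.
- match goal with Hw : tyv _ _ (VS _) _ |- _ => inversion Hw; subst end.
  by exists t0; split => //; apply: tyc_subst1; eassumption.
- by move=> i c'; case: ifP => // Hi [<-]; exists t0; split; eauto.
- case: (val_nat _) => // k.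
  by move=> i c'; case: ifP => // Hi [<-]; exists t0; split; eauto.
- by move=> i c' [<-]; exists t0; split => //; econstructor; eauto; exact: numeral_ty.
- case: (val_nat _) => // k.
  by move=> i c' [<-]; exists t0; split => //; econstructor; eauto; exact: numeral_ty.
Qed.

Lemma run_leaf_ty n c p V t : config_ty c t -> run n c p = LLeaf _ V -> tyv ar [::] V t.
Proof.
elim: n c p => [|n IH] c p Hc //=.
move: (step_preserves_ty Hc); case: (step c) => [c'|v|s k kids|] //=.
- by move=> Hc'; apply: IH.
- by case: p => // Hv [<-].
- by move=> Hkids; case: p => // i p; case E: (kids i) => [c'|] //; apply/IH/Hkids/E.
Qed.

Lemma opsem_leaf_ty M t p V : tyc ar [::] M t -> opsem M p = LLeaf _ V -> tyv ar [::] V t.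
Proof. by move=> HM; apply: run_leaf_ty; exists t. Qed.

End Typing.

Lemma restrict_ext Sig (P Q : Defs.val Sig -> Prop) (tr : tree Sig (Defs.val Sig)) :
  (forall p V, tr p = LLeaf _ V -> (P V <-> Q V)) -> restrict P tr = restrict Q tr.
Proof.
move=> PQ; apply: functional_extensionality => p; rewrite /restrict.
case: excluded_middle_informative => [[k [V [Hk [HV HP]]]]|notP];
case: excluded_middle_informative => [[k' [V' [Hk' [HV' HQ]]]]|notQ] //.
- by case: notQ; exists k, V; rewrite -(PQ _ _ HV).
- by case: notP; exists k', V'; rewrite (PQ _ _ HV').
Qed.

Scheme vform_mut_ind := Induction for vform Sort Prop
with cform_mut_ind := Induction for cform Sort Prop.
Combined Scheme formula_mut_ind from vform_mut_ind, cform_mut_ind.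
Scheme pvform_mut_ind := Induction for pvform Sort Prop
with pcform_mut_ind := Induction for pcform Sort Prop.
Combined Scheme pure_formula_mut_ind from pvform_mut_ind, pcform_mut_ind.

Fixpoint ty_size (t : ty) : nat :=
  if t is TArr t1 t2 then (ty_size t1 + ty_size t2).+1 else 1.

Section Expressiveness.
Local Set Implicit Arguments.
Local Unset Strict Implicit.
Variables (Sig : Type) (ar : Sig -> arity) (O : Type) (osem : O -> tree Sig unit -> Prop).
Local Notation value := (Defs.val Sig).
Local Notation term := (Defs.comp Sig).
Local Notation vform := (vform Sig ar O).
Local Notation cform := (cform Sig ar O).
Local Notation satv := (@satv Sig ar O osem _ _).
Local Notation satc := (@satc Sig ar O osem _ _).
Local Notation psatv := (@psatv Sig ar O osem _ _).
Local Notation psatc := (@psatc Sig ar O osem _ _).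

Lemma sat_mod_ext b t o (phi : vform b t) (psi : pvform O b t) M :
  (forall p V, opsem M p = LLeaf _ V -> (satv phi V <-> psatv psi V)) ->
  (satc (FMod _ _ _ b t o phi) M <-> psatc (PMod O b t o psi) M).
Proof. by move=> equiv_leaves /=; rewrite (@restrict_ext _ _ _ _ equiv_leaves). Qed.

Lemma PArr_in_V b t t' (psi : pvform O b t) (Psi : pcform O b t') (Phi : cform b t') :
  (forall M, satc Phi M <-> psatc Psi M) ->
  exists phi : vform b (TArr t t'), forall W, satv phi W <-> psatv (PArr O b t t' psi Psi) W.
Proof.
move=> PhiPsi.
pose I := {V : value | tyv ar [::] V t /\ psatv psi V}.
exists (FVAnd _ _ _ b _ I (fun V => FPt _ _ _ b t t' _ (proj1 (proj2_sig V)) Phi)) => W /=.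
split=> [HW V HV psiV | HW [V [HV psiV]]]; apply/PhiPsi; last exact: HW.
exact: (HW (exist _ V (conj HV psiV))).
Qed.

Lemma pure_formula_in_V :
  (forall b t (psi : pvform O b t), exists phi : vform b t, forall V, satv phi V <-> psatv psi V) /\
  (forall b t (Psi : pcform O b t), exists Phi : cform b t, forall M, satc Phi M <-> psatc Psi M).
Proof.
apply: pure_formula_mut_ind.
- by move=> b n; exists (FNum _ _ _ b n).
- by move=> b t t' psi _ Psi [Phi PhiPsi]; apply: PArr_in_V PhiPsi.
- move=> b t I f IH; have [g Hg] := ClassicalEpsilon.choice _ IH.
  by exists (FVAnd _ _ _ b t I g) => W /=; split=> H i; apply/Hg.
- move=> b t I f IH; have [g Hg] := ClassicalEpsilon.choice _ IH.
  by exists (FVOr _ _ _ b t I g) => W /=; split=> -[i H]; exists i; apply/Hg.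
- by move=> t psi [phi H]; exists (FVNeg _ _ _ t phi) => W /=; rewrite H.
- move=> b t o psi [phi H]; exists (FMod _ _ _ b t o phi) => M.
  by apply: sat_mod_ext => p V _.
- move=> b t I f IH; have [g Hg] := ClassicalEpsilon.choice _ IH.
  by exists (FCAnd _ _ _ b t I g) => M /=; split=> H i; apply/Hg.
- move=> b t I f IH; have [g Hg] := ClassicalEpsilon.choice _ IH.
  by exists (FCOr _ _ _ b t I g) => M /=; split=> -[i H]; exists i; apply/Hg.
- by move=> t Psi [Phi H]; exists (FCNeg _ _ _ t Phi) => M /=; rewrite H.
Qed.

Definition v_expressible b t (phi : vform b t) : Prop :=
  exists psi : pvform O b t, forall V, tyv ar [::] V t -> (satv phi V <-> psatv psi V).

Definition c_expressible b t (Phi : cform b t) : Prop :=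
  exists Psi : pcform O b t, forall M, tyc ar [::] M t -> (satc Phi M <-> psatc Psi M).

Definition app_monotone b : Prop :=
  forall t1 t' W V U, tyv ar [::] W (TArr t1 t') -> vle ar osem b t1 V U ->
  forall Phi : cform b t', satc Phi (CApp W V) -> satc Phi (CApp W U).

Lemma vle_separate b t V U : tyv ar [::] V t -> tyv ar [::] U t -> ~ vle ar osem b t V U ->
  exists phi : vform b t, satv phi V /\ ~ satv phi U.
Proof.
move=> HV HU notVU; apply: NNPP => no_sep; apply: notVU; split=> //; split=> //.
by move=> phi phiV; apply: NNPP => phiU; apply: no_sep; exists phi.
Qed.

Lemma FPt_expressible b t1 t' V (HV : tyv ar [::] V t1) (Phi : cform b t') :
  app_monotone b -> (forall phi : vform b t1, v_expressible phi) -> c_expressible Phi ->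
  v_expressible (FPt _ _ _ b t1 t' V HV Phi).
Proof.
move=> mono expr_t1 [Psi PhiPsi].
pose I := {U : value | tyv ar [::] U t1 /\ ~ vle ar osem b t1 V U}.
have separator (i : I) : exists psi : pvform O b t1, psatv psi V /\ ~ psatv psi (sval i).
  case: i => U [HU notVU] /=; have [phi [phiV phiU]] := vle_separate HV HU notVU.
  have [psi phipsi] := expr_t1 phi.
  by exists psi; rewrite -(phipsi V HV) -(phipsi U HU).
have [chi chiP] := ClassicalEpsilon.choice _ separator.
exists (PArr O b t1 t' (PVAnd O b t1 I chi) Psi) => W HW /=.
have HWU U : tyv ar [::] U t1 -> tyc ar [::] (CApp W U) t' by move=> HU; econstructor; eauto.
split=> [WV U HU chiU | Hchi].
- have VU : vle ar osem b t1 V U.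
    by apply: NNPP => notVU; apply: (chiP (exist _ U (conj HU notVU))).2.
  by apply/(PhiPsi _ (HWU U HU)); apply: mono VU _ WV.
- by apply/(PhiPsi _ (HWU V HV))/Hchi => // i; case: (chiP i).
Qed.

Lemma formula_expressible_upto n :
  (forall b t (phi : vform b t), app_monotone b -> ty_size t <= n -> v_expressible phi) /\
  (forall b t (Phi : cform b t), app_monotone b -> ty_size t <= n -> c_expressible Phi).
Proof.
elim: n => [|n [IHv _]]; first by split=> b [].
apply: formula_mut_ind.
- by move=> b k _ _; exists (PNum O b k).
- move=> b t1 t' V HV Phi IH mono /= size_le; apply: FPt_expressible => // [phi|].
  + by apply: IHv => //; rewrite -ltnS (leq_trans _ size_le) // ltnS leq_addr.
  + by apply: IH => //; rewrite (leq_trans _ size_le) // ltnW // ltnS leq_addl.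
- move=> b t I f IH mono size_le; have [g Hg] := ClassicalEpsilon.choice _ (fun i => IH i mono size_le).
  by exists (PVAnd O b t I g) => W HW /=; split=> H i; apply/(Hg i W HW).
- move=> b t I f IH mono size_le; have [g Hg] := ClassicalEpsilon.choice _ (fun i => IH i mono size_le).
  by exists (PVOr O b t I g) => W HW /=; split=> -[i H]; exists i; apply/(Hg i W HW).
- move=> t phi IH mono size_le; have [psi H] := IH mono size_le.
  by exists (PVNeg O t psi) => W HW /=; rewrite (H W HW).
- move=> b t o phi IH mono size_le; have [psi H] := IH mono size_le.
  exists (PMod O b t o psi) => M HM; apply: sat_mod_ext => p V leaf.
  exact/H/opsem_leaf_ty/leaf.
- move=> b t I f IH mono size_le; have [g Hg] := ClassicalEpsilon.choice _ (fun i => IH i mono size_le).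
  by exists (PCAnd O b t I g) => M HM /=; split=> H i; apply/(Hg i M HM).
- move=> b t I f IH mono size_le; have [g Hg] := ClassicalEpsilon.choice _ (fun i => IH i mono size_le).
  by exists (PCOr O b t I g) => M HM /=; split=> -[i H]; exists i; apply/(Hg i M HM).
- move=> t Phi IH mono size_le; have [Psi H] := IH mono size_le.
  by exists (PCNeg O t Psi) => M HM /=; rewrite (H M HM).
Qed.

Lemma equi_expressive_of_app_monotone b : app_monotone b -> equi_expressive ar osem b b.
Proof.
move=> mono; split=> t.
- by move=> phi; apply: (proj1 (formula_expressible_upto (ty_size t))).
- by move=> Phi; apply: (proj2 (formula_expressible_upto (ty_size t))).
- by move=> psi; have [phi H] := proj1 pure_formula_in_V _ _ psi; exists phi.
- by move=> Psi; have [Phi H] := proj2 pure_formula_in_V _ _ Psi; exists Phi.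
Qed.

Lemma vle_refl b t V : tyv ar [::] V t -> vle ar osem b t V V.
Proof. by split; last split. Qed.

Lemma vle_true_sym t V U : vle ar osem true t V U -> vle ar osem true t U V.
Proof.
move=> [HV [HU VU]]; split=> //; split=> //.
by move=> phi phiU; apply: NNPP => phiV; apply: (VU (FVNeg _ _ _ t phi)).
Qed.

Lemma openv_closed (R : ty -> value -> value -> Prop) t V U :
  tyv ar [::] V t -> tyv ar [::] U t -> R t V U -> openv ar R [::] t V U.
Proof. by move=> HV HU VU; split=> //; split=> //; case=> [|? ?] [] //=; rewrite !csv_nil. Qed.

Lemma openc_closed (R : ty -> term -> term -> Prop) t M N : openc ar R [::] t M N -> R t M N.
Proof. by case=> _ [_ MN]; move: (MN [::]); rewrite !csc_nil; apply; split=> // -[]. Qed.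

Lemma compatible_app_monotone b (Rv : ty -> value -> value -> Prop) (Rc : ty -> term -> term -> Prop) :
  (forall t V, tyv ar [::] V t -> Rv t V V) -> (forall t V U, vle ar osem b t V U -> Rv t V U) ->
  (forall t M N, Rc t M N -> cle ar osem b t M N) ->
  compatible ar (openv ar Rv) (openc ar Rc) -> app_monotone b.
Proof.
move=> Rv_refl Rv_vle Rc_cle [_ [_ [_ [_ [_ [compat_app _]]]]]] t1 t' W V U HW VU.
have [HV [HU _]] := VU.
have := compat_app [::] t1 t' W W V U (openv_closed HW HW (Rv_refl _ _ HW))
                                      (openv_closed HV HU (Rv_vle _ _ _ VU)).
by case/openc_closed/Rc_cle=> _ [_].
Qed.

End Expressiveness.

Theorem proposition8p3 (Sig : Type) (ar : Sig -> arity)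
    (O : Type) (osem : O -> tree Sig unit -> Prop) :
  (compatible ar (openv ar (veq ar osem true)) (openc ar (ceq ar osem true)) ->
     equi_expressive ar osem true true) /\
  (compatible ar (openv ar (vle ar osem false)) (openc ar (cle ar osem false)) ->
     equi_expressive ar osem false false).
Proof.
split=> compat; apply: equi_expressive_of_app_monotone; apply: compatible_app_monotone compat.
- by move=> t V HV; split; apply: vle_refl.
- by move=> t V U VU; split; last exact: vle_true_sym.
- by move=> t M N [].
- exact: vle_refl.
- by [].
- by [].
Qed.
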